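(* For every integer $n\geq 2$, the operator $W_n^{*}$ on $H^2$ is frequently hypercyclic.
   Context: $H^2$ denotes the Hardy space of analytic functions $f(z)=\sum_{k\ge0}\hat f(k)z^k$ on the open unit disk with $\sum_{k}|\hat f(k)|^2<\infty$. For $n\in\mathbb{N}$, $W_n$ is the bounded operator on $H^2$ given by $W_nf(z)=(1+z+\cdots+z^{n-1})f(z^n)$, and $W_n^{*}$ is its adjoint. For $A\subseteq\mathbb{N}$, its lower density is $\liminf_{N\to\infty}\mathrm{card}(A\cap[1,N])/N$. An operator $T$ on a separable Banach space $Y$ is frequently hypercyclic if there is $y\in Y$ such that for every non-empty open $V\subseteq Y$, the set $\{k\in\mathbb{N}: T^ky\in V\}$ has positive lower density. *)

From Stdlib Require Import Reals ClassicalEpsilon.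
From Coquelicot Require Import Coquelicot.

(* H^2 is identified with the space of coefficient sequences
   f = (\hat f(k))_{k >= 0} with sum_k |\hat f(k)|^2 < oo. *)
Definition inH2 (f : nat -> C) : Prop :=
  ex_series (fun k => (Cmod (f k)) ^ 2).

Definition H2norm (f : nat -> C) : R :=
  sqrt (Series (fun k => (Cmod (f k)) ^ 2)).

Definition H2inner (f g : nat -> C) : C :=
  (Series (fun k => Re (Cmult (f k) (Cconj (g k)))),
   Series (fun k => Im (Cmult (f k) (Cconj (g k))))).

(* W_n f(z) = (1 + z + ... + z^{n-1}) f(z^n): the coefficient of z^m in
   W_n f is \hat f(m / n) (Euclidean quotient), since
   W_n f(z) = sum_k \hat f(k) (z^{nk} + ... + z^{nk+n-1}). *)
Definition W (n : nat) (f : nat -> C) : nat -> C :=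
  fun m => f (m / n)%nat.

Definition is_adjoint_W (n : nat) (T : (nat -> C) -> (nat -> C)) : Prop :=
  forall f g, inH2 f -> inH2 g ->
    inH2 (T g) /\ H2inner (W n f) g = H2inner f (T g).

Fixpoint count_upto (A : nat -> Prop) (N : nat) : nat :=
  match N with
  | O => O
  | S m => (count_upto A m +
            (if excluded_middle_informative (A (S m)) then 1 else 0))%nat
  end.

Definition lower_density (A : nat -> Prop) : Rbar :=
  LimInf_seq (fun N => INR (count_upto A N) / INR N).

Definition H2open (V : (nat -> C) -> Prop) : Prop :=
  forall x, V x -> inH2 x /\
    exists eps : R, 0 < eps /\
      forall y, inH2 y -> H2norm (fun k => Cminus (y k) (x k)) < eps -> V y.

Definition frequently_hypercyclic (T : (nat -> C) -> (nat -> C)) : Prop :=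
  exists y, inH2 y /\
    forall V, H2open V -> (exists x, V x) ->
      Rbar_lt (Finite 0) (lower_density (fun k => V (Nat.iter k T y))).

(* The adjoint T = W_n^* acts on coefficients by block sums,
   (T g)(k) = g(nk) + ... + g(nk + n - 1), so T^j y (i) is the sum of y over the block
   [i n^j, (i + 1) n^j).  Fix a countable dense family of finitely supported targets x_l whose
   coefficients sum to zero, and pairwise disjoint sets of "visit times" of positive lower
   density, any two visits being far apart.  For every visit j of l, the vector y carries x_l,
   scaled by n^-j, on the generations [n^d, n^(d+1)) with j - 1 <= d < j + G_l; then T^j y
   coincides with x_l on the support of x_l.  Since the targets sum to zero, the partial sums
   of y vanish outside these windows, and later visits contribute to T^j y only terms that are
   exponentially small in their distance to j.  Hence T^j y is close to x_l at every visit j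
   of l. *)

From Stdlib Require Import Reals.
From Coquelicot Require Import Coquelicot.
From Stdlib Require Import Lra Lia ZArith ClassicalEpsilon.
From Stdlib Require Cantor.

(** * Finite sums *)

Fixpoint csum (f : nat -> C) (N : nat) : C :=
  match N with O => RtoC 0 | S m => Cplus (csum f m) (f m) end.

Fixpoint rsum (f : nat -> R) (N : nat) : R :=
  match N with O => 0%R | S m => (rsum f m + f m)%R end.

Section FiniteSums.
Local Open Scope R_scope.
Implicit Types (f g : nat -> R) (u v : nat -> C).

Lemma rsum_ext f g N : (forall i, (i < N)%nat -> f i = g i) -> rsum f N = rsum g N.
Proof.
  induction N as [|N IH]; intros H; simpl; auto.
  rewrite IH, H; auto with arith.
Qed.

Lemma csum_ext u v N : (forall i, (i < N)%nat -> u i = v i) -> csum u N = csum v N.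
Proof.
  induction N as [|N IH]; intros H; simpl; auto.
  rewrite IH, H; auto with arith.
Qed.

Lemma rsum_add f a b : rsum f (a + b) = rsum f a + rsum (fun t => f (a + t)%nat) b.
Proof.
  induction b as [|b IH]; simpl; [rewrite Nat.add_0_r; ring|].
  rewrite Nat.add_succ_r; simpl; rewrite IH; ring.
Qed.

Lemma csum_add u a b : csum u (a + b) = (csum u a + csum (fun t => u (a + t)%nat) b)%C.
Proof.
  induction b as [|b IH]; simpl; [rewrite Nat.add_0_r; ring|].
  rewrite Nat.add_succ_r; simpl; rewrite IH; ring.
Qed.

Lemma csum_block u a B : csum u (a * B) = csum (fun i => csum (fun t => u (i * B + t)%nat) B) a.
Proof. induction a as [|a IH]; simpl; auto. rewrite Nat.add_comm, csum_add, IH; auto. Qed.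

Lemma rsum_le f g N : (forall i, (i < N)%nat -> f i <= g i) -> rsum f N <= rsum g N.
Proof.
  induction N as [|N IH]; intros H; simpl; [lra|].
  apply Rplus_le_compat; auto with arith.
Qed.

Lemma rsum_const c N : rsum (fun _ => c) N = INR N * c.
Proof. induction N as [|N IH]; cbn [rsum]; [simpl; ring|]. rewrite IH, S_INR; ring. Qed.

Lemma csum_const c N : csum (fun _ => c) N = (RtoC (INR N) * c)%C.
Proof.
  induction N as [|N IH]; cbn [csum]; [apply injective_projections; simpl; ring|].
  rewrite IH, S_INR; apply injective_projections; simpl; ring.
Qed.

Lemma rsum_nonneg f N : (forall i, (i < N)%nat -> 0 <= f i) -> 0 <= rsum f N.
Proof. intros H; rewrite <- (Rmult_0_r (INR N)), <- rsum_const; now apply rsum_le. Qed.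

Lemma rsum_le_mono f N N' : (forall i, 0 <= f i) -> (N <= N')%nat -> rsum f N <= rsum f N'.
Proof.
  intros Hf HN; replace N' with (N + (N' - N))%nat by lia; rewrite rsum_add.
  pose proof (rsum_nonneg (fun t => f (N + t)%nat) (N' - N) (fun i _ => Hf _)); lra.
Qed.

Lemma rsum_plus f g N : rsum (fun i => f i + g i) N = rsum f N + rsum g N.
Proof. induction N as [|N IH]; simpl; [ring|]. rewrite IH; ring. Qed.

Lemma rsum_scal c f N : rsum (fun i => c * f i) N = c * rsum f N.
Proof. induction N as [|N IH]; simpl; [ring|]. rewrite IH; ring. Qed.

Lemma csum_minus u v N : csum (fun i => u i - v i)%C N = (csum u N - csum v N)%C.
Proof.
  induction N as [|N IH]; simpl; [apply injective_projections; simpl; ring|].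
  rewrite IH; ring.
Qed.

Lemma rsum_zero f N : (forall i, (i < N)%nat -> f i = 0) -> rsum f N = 0.
Proof. intros H; rewrite (rsum_ext f (fun _ => 0)), rsum_const by auto; ring. Qed.

Lemma csum_zero u N : (forall i, (i < N)%nat -> u i = 0%C) -> csum u N = 0%C.
Proof.
  intros H; rewrite (csum_ext u (fun _ => 0%C)), csum_const by auto.
  apply injective_projections; simpl; ring.
Qed.

Lemma Cmod_csum u N : Cmod (csum u N) <= rsum (fun i => Cmod (u i)) N.
Proof.
  induction N as [|N IH]; simpl; [rewrite Cmod_0; lra|].
  eapply Rle_trans; [apply Cmod_triangle | lra].
Qed.

Lemma Re_csum u N : Re (csum u N) = rsum (fun i => Re (u i)) N.
Proof. induction N as [|N IH]; simpl; auto. now rewrite <- IH. Qed.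

Lemma Im_csum u N : Im (csum u N) = rsum (fun i => Im (u i)) N.
Proof. induction N as [|N IH]; simpl; auto. now rewrite <- IH. Qed.

Lemma Cconj_csum u N : Cconj (csum u N) = csum (fun i => Cconj (u i)) N.
Proof.
  induction N as [|N IH]; simpl; [apply injective_projections; simpl; ring|].
  now rewrite Cplus_conj, IH.
Qed.

Lemma sum_n_rsum f N : sum_n f N = rsum f (S N).
Proof.
  induction N as [|N IH]; [simpl; rewrite sum_O; ring|].
  rewrite sum_Sn, IH; simpl; unfold plus; simpl; ring.
Qed.

Lemma rsum_geom q K : rsum (pow q) K * (1 - q) = 1 - q ^ K.
Proof. induction K as [|K IH]; simpl; [ring|]. rewrite Rmult_plus_distr_r, IH; ring. Qed.

Lemma csum_const_inv N z : N <> 0%nat -> csum (fun _ => (RtoC (/ INR N) * z)%C) N = z.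
Proof.
  intros HN; rewrite csum_const; destruct z as [a b].
  apply not_0_INR in HN; apply injective_projections; simpl; field; auto.
Qed.

Lemma rsum_term_le f N i : (forall j, 0 <= f j) -> (i < N)%nat -> f i <= rsum f N.
Proof.
  intros Hf Hi; apply Rle_trans with (rsum f (S i)); [|apply rsum_le_mono; auto].
  simpl; pose proof (rsum_nonneg f i (fun j _ => Hf j)); lra.
Qed.

Lemma rsum_supported_le f a c N : (forall i, 0 <= f i) ->
  (forall i, (i < a \/ c <= i)%nat -> f i = 0) -> (a <= c)%nat ->
  rsum f N <= rsum (fun t => f (a + t)%nat) (c - a).
Proof.
  intros Hf Hout Hac.
  apply Rle_trans with (rsum f (c + N)); [apply rsum_le_mono; auto; lia|].
  rewrite rsum_add, (rsum_zero (fun t => f (c + t)%nat)) by (intros; apply Hout; lia).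
  replace c with (a + (c - a))%nat at 1 by lia.
  rewrite rsum_add, (rsum_zero f a) by (intros; apply Hout; lia); lra.
Qed.

Lemma Cmod_sub_sq_le (a b : C) : Cmod (a - b)%C ^ 2 <= 2 * Cmod a ^ 2 + 2 * Cmod b ^ 2.
Proof.
  assert (Cmod (a - b)%C <= Cmod a + Cmod b).
  { eapply Rle_trans; [apply Cmod_triangle|]; rewrite Cmod_opp; lra. }
  pose proof (Cmod_ge_0 (a - b)%C); pose proof (Cmod_ge_0 a); pose proof (Cmod_ge_0 b).
  assert (Cmod (a - b)%C ^ 2 <= (Cmod a + Cmod b) ^ 2) by (apply pow_incr; lra).
  assert (0 <= (Cmod a - Cmod b) ^ 2) by apply pow2_ge_0.
  nra.
Qed.

End FiniteSums.

Section Series.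
Local Open Scope R_scope.

Lemma series_bounded_partial_sums (a : nat -> R) B :
  (forall k, 0 <= a k) -> (forall N, rsum a N <= B) -> ex_series a /\ Series a <= B.
Proof.
  intros Hpos HB.
  assert (Hex : ex_series a).
  { destruct (ex_finite_lim_seq_incr (sum_n a) B) as [l Hl].
    - intros N; rewrite !sum_n_rsum; apply rsum_le_mono; auto.
    - intros N; rewrite sum_n_rsum; auto.
    - now exists l. }
  split; auto.
  apply (is_lim_seq_le (sum_n a) (fun _ => B) (Series a) B);
    [|apply Series_correct, Hex|apply is_lim_seq_const].
  intros N; rewrite sum_n_rsum; auto.
Qed.

Lemma is_series_finite_support (a : nat -> R) N :
  (forall k, (N <= k)%nat -> a k = 0) -> is_series a (rsum a N).
Proof.
  intros H; apply (filterlim_ext_loc (fun _ => rsum a N)); [|apply filterlim_const].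
  exists N; intros M HM; rewrite sum_n_rsum.
  replace (S M) with (N + (S M - N))%nat by lia.
  rewrite rsum_add, (rsum_zero (fun t => a (N + t)%nat)); [ring|].
  intros; apply H; lia.
Qed.

Lemma rsum_le_Series (a : nat -> R) :
  (forall k, 0 <= a k) -> ex_series a -> forall N, rsum a N <= Series a.
Proof.
  intros Hp Hex N.
  apply (is_lim_seq_le_loc (fun _ => rsum a N) (sum_n a) (rsum a N) (Series a));
    [|apply is_lim_seq_const|apply Series_correct, Hex].
  exists N; intros m Hm; rewrite sum_n_rsum; apply rsum_le_mono; auto.
Qed.

Lemma series_tail_small (a : nat -> R) eps :
  (forall k, 0 <= a k) -> ex_series a -> 0 < eps ->
  exists K, forall N, rsum (fun i => if Nat.leb K i then a i else 0) N <= eps.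
Proof.
  intros Hp Hex He.
  assert (Hl : is_lim_seq (sum_n a) (Series a)) by apply (Series_correct a Hex).
  apply is_lim_seq_spec in Hl; destruct (Hl (mkposreal eps He)) as [K0 HK0]; simpl in HK0.
  exists (S K0); intros N.
  specialize (HK0 K0 (Nat.le_refl _)); rewrite sum_n_rsum in HK0; apply Rabs_def2 in HK0.
  assert (Hhead : forall i, (i < S K0)%nat -> (if Nat.leb (S K0) i then a i else 0) = 0).
  { intros i Hi; destruct (Nat.leb_spec (S K0) i); [lia|auto]. }
  destruct (Compare_dec.le_lt_dec N (S K0)).
  - rewrite rsum_zero; [lra|]. intros; apply Hhead; lia.
  - replace N with (S K0 + (N - S K0))%nat by lia.
    rewrite rsum_add, rsum_zero by auto.
    rewrite (rsum_ext _ (fun t => a (S K0 + t)%nat)).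
    + pose proof (rsum_le_Series a Hp Hex (S K0 + (N - S K0))) as Hs.
      rewrite rsum_add in Hs; lra.
    + intros t _; destruct (Nat.leb_spec (S K0) (S K0 + t)); [auto|lia].
Qed.

End Series.

(** * The adjoint of [W_n] *)

Definition unit_seq (k : nat) : nat -> C :=
  fun i => if Nat.eq_dec i k then RtoC 1 else RtoC 0.

Lemma inH2_unit_seq k : inH2 (unit_seq k).
Proof.
  exists (rsum (fun i => Cmod (unit_seq k i) ^ 2)%R (S k)).
  apply is_series_finite_support; intros i Hi.
  unfold unit_seq; destruct (Nat.eq_dec i k); [lia|]. rewrite Cmod_0; ring.
Qed.

Lemma H2inner_finite_support f g N : (forall m, (N <= m)%nat -> f m = RtoC 0) ->
  H2inner f g = csum (fun m => Cmult (f m) (Cconj (g m))) N.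
Proof.
  intros Hf; unfold H2inner; apply injective_projections; cbn [fst snd].
  - rewrite Re_csum; apply is_series_unique, is_series_finite_support.
    intros m Hm; rewrite Hf by auto; simpl; ring.
  - rewrite Im_csum; apply is_series_unique, is_series_finite_support.
    intros m Hm; rewrite Hf by auto; simpl; ring.
Qed.

Lemma H2inner_unit_seq k g : H2inner (unit_seq k) g = Cconj (g k).
Proof.
  rewrite (H2inner_finite_support _ _ (S k)); simpl.
  - rewrite csum_zero.
    + unfold unit_seq; destruct (Nat.eq_dec k k) as [_|]; [ring|lia].
    + intros i Hi; unfold unit_seq; destruct (Nat.eq_dec i k); [lia|ring].
  - intros m Hm; unfold unit_seq; destruct (Nat.eq_dec m k); [lia|auto].
Qed.

Lemma H2inner_W_unit_seq n k g : (1 <= n)%nat ->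
  H2inner (W n (unit_seq k)) g = Cconj (csum (fun t => g (n * k + t)%nat) n).
Proof.
  intros Hn; unfold W, unit_seq.
  rewrite (H2inner_finite_support _ _ (n * k + n)), csum_add, csum_zero, Cconj_csum.
  - rewrite Cplus_0_l; apply csum_ext; intros t Ht.
    destruct (Nat.eq_dec ((n * k + t) / n) k) as [_|e]; [ring|].
    exfalso; apply e; rewrite Nat.mul_comm, Nat.div_add_l, Nat.div_small by lia; lia.
  - intros i Hi; destruct (Nat.eq_dec (i / n) k) as [e|]; [|ring].
    exfalso; assert (i / n < k)%nat by (apply Nat.Div0.div_lt_upper_bound; lia); lia.
  - intros i Hi; destruct (Nat.eq_dec (i / n) k) as [e|]; auto.
    exfalso; assert (k + 1 <= i / n)%nat by (apply Nat.div_le_lower_bound; lia); lia.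
Qed.

Section AdjointW.
Variables (n : nat) (T : (nat -> C) -> nat -> C).
Hypotheses (Hn : (1 <= n)%nat) (HT : is_adjoint_W n T).

Lemma adjoint_W_inH2 g : inH2 g -> inH2 (T g).
Proof. intros Hg; exact (proj1 (HT _ _ (inH2_unit_seq 0) Hg)). Qed.

Lemma adjoint_W_apply g k : inH2 g -> T g k = csum (fun t => g (n * k + t)%nat) n.
Proof.
  intros Hg; destruct (HT _ _ (inH2_unit_seq k) Hg) as [_ Hadj].
  rewrite H2inner_W_unit_seq, H2inner_unit_seq in Hadj by auto.
  now rewrite <- (Cconj_conj (T g k)), <- Hadj, Cconj_conj.
Qed.

Lemma adjoint_W_iter g j : inH2 g ->
  inH2 (Nat.iter j T g) /\
  forall i, Nat.iter j T g i = csum (fun m => g (i * n ^ j + m)%nat) (n ^ j).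
Proof.
  intros Hg; induction j as [|j [IH1 IH2]].
  - split; auto. intros i; simpl; rewrite Nat.mul_1_r, Nat.add_0_r; ring.
  - change (Nat.iter (S j) T g) with (T (Nat.iter j T g)).
    split; [now apply adjoint_W_inH2|]. intros i.
    rewrite adjoint_W_apply, Nat.pow_succ_r', csum_block by auto.
    apply csum_ext; intros t Ht; rewrite IH2; apply csum_ext; intros m Hm.
    f_equal; nia.
Qed.

End AdjointW.

(** * Counting and lower density *)

Lemma INR_div_ge a b : (0 < b)%nat -> (INR a / INR b - 1 <= INR (a / b))%R.
Proof.
  intros Hb.
  assert (0 < INR b)%R by (apply lt_0_INR; lia).
  assert (E : INR a = (INR b * INR (a / b) + INR (a mod b))%R)
    by (rewrite <- mult_INR, <- plus_INR; f_equal; apply Nat.div_mod_eq).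
  assert (INR (a mod b) + 1 <= INR b)%R
    by (rewrite <- S_INR; apply le_INR, Nat.mod_upper_bound; lia).
  apply Rmult_le_reg_r with (INR b); auto.
  rewrite Rmult_minus_distr_r; unfold Rdiv; rewrite Rmult_assoc, Rinv_l by lra; nra.
Qed.

Section Counting.
Local Open Scope nat_scope.
Implicit Types (A B : nat -> Prop).

Lemma count_mono A B N :
  (forall k, (1 <= k <= N) -> A k -> B k) -> (count_upto A N <= count_upto B N).
Proof.
  induction N as [|N IH]; intros H; simpl; [lia|].
  assert (count_upto A N <= count_upto B N) by (apply IH; intros; apply H; auto; lia).
  destruct (excluded_middle_informative (A (S N))) as [a|],
    (excluded_middle_informative (B (S N))) as [|b];
    try lia.
  exfalso; apply b, H; auto; lia.
Qed.

Lemma count_le_N A N : (count_upto A N <= N).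
Proof. induction N; simpl; [lia|]. destruct (excluded_middle_informative (A (S N))); lia. Qed.

Lemma count_le_mono A N N' : (N <= N') -> (count_upto A N <= count_upto A N').
Proof. induction 1; simpl; lia. Qed.

Lemma count_or A B N :
  (count_upto (fun k => A k \/ B k) N <= count_upto A N + count_upto B N).
Proof.
  induction N; simpl; [lia|].
  destruct (excluded_middle_informative (A (S N) \/ B (S N))) as [[h|h]|h],
    (excluded_middle_informative (A (S N))), (excluded_middle_informative (B (S N)));
    tauto || lia.
Qed.

Lemma count_add A N M :
  count_upto A (N + M) = (count_upto A N + count_upto (fun k => A (N + k)) M).
Proof.
  induction M as [|M IH]; [rewrite Nat.add_0_r; simpl; lia|].
  rewrite Nat.add_succ_r; simpl; rewrite IH, Nat.add_succ_r; lia.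
Qed.

Lemma count_zero A N : (forall k, (1 <= k <= N) -> ~ A k) -> count_upto A N = 0.
Proof.
  induction N as [|N IH]; intros H; simpl; auto.
  rewrite IH by (intros; apply H; lia).
  destruct (excluded_middle_informative (A (S N))) as [a|]; auto.
  exfalso; apply (H (S N)); auto; lia.
Qed.

Lemma count_window A a w N :
  (forall k, (1 <= k) -> A k -> (a <= k <= a + w)) -> (count_upto A N <= w + 1).
Proof.
  intros H.
  apply (Nat.le_trans _ (count_upto A (a + w + N))); [apply count_le_mono; lia|].
  rewrite count_add, (count_zero (fun k => A (a + w + k))) by (intros k Hk HA; apply H in HA; lia).
  replace (a + w) with ((a - 1) + (a + w - (a - 1))) by lia.
  rewrite count_add, count_zero by (intros k Hk HA; apply H in HA; lia).
  pose proof (count_le_N (fun k => A (a - 1 + k)) (a + w - (a - 1))); lia.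
Qed.

Lemma count_multiples P q : (1 <= P) -> count_upto (fun k => k mod P = 0) (q * P) = q.
Proof.
  intros HP; induction q as [|q IH]; auto.
  replace (S q * P) with (q * P + ((P - 1) + 1)) by nia.
  rewrite count_add, IH, count_add, count_zero; simpl.
  - replace (q * P + (P - 1 + 1)) with (P + q * P) by lia.
    rewrite Nat.Div0.mod_add, Nat.Div0.mod_same.
    destruct (excluded_middle_informative (0 = 0)); lia.
  - intros k Hk; rewrite Nat.add_comm, Nat.Div0.mod_add, Nat.mod_small by lia; lia.
Qed.

Lemma count_multiples_ge P N : (1 <= P) -> (N / P <= count_upto (fun k => k mod P = 0) N).
Proof.
  intros HP; rewrite <- (count_multiples P (N / P)) at 1 by auto.
  apply count_le_mono; rewrite Nat.mul_comm; apply Nat.Div0.mul_div_le.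
Qed.

Lemma count_exists (B : nat -> nat -> Prop) K N :
  (INR (count_upto (fun k => exists i, (i < K)%nat /\ B i k) N)
   <= rsum (fun i => INR (count_upto (B i) N)) K)%R.
Proof.
  induction K as [|K IH]; simpl.
  - rewrite count_zero; [simpl; lra|]. intros k _ [i [Hi _]]; lia.
  - eapply Rle_trans; [|apply Rplus_le_compat_r, IH].
    rewrite <- plus_INR; apply le_INR.
    eapply Nat.le_trans; [|apply count_or]; apply count_mono.
    intros k _ [i [Hi HB]]; destruct (Nat.eq_dec i K) as [->|]; [right; auto|].
    left; exists i; split; auto; lia.
Qed.

Lemma lower_density_pos_of_bound A c N0 : (0 < c)%R ->
  (forall N, (N0 <= N) -> (c * INR N <= INR (count_upto A N))%R) ->
  Rbar_lt (Finite 0) (lower_density A).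
Proof.
  intros Hc H; apply Rbar_lt_le_trans with (Finite c); [simpl; auto|].
  rewrite <- (LimInf_seq_const c); apply LimInf_le.
  exists (S N0); intros N HN.
  assert (0 < INR N)%R by (apply lt_0_INR; lia).
  apply Rmult_le_reg_r with (INR N); auto.
  unfold Rdiv; rewrite Rmult_assoc, Rinv_l, Rmult_1_r by lra; apply H; lia.
Qed.

Lemma lower_density_pos_mono A B :
  (forall k, A k -> B k) ->
  Rbar_lt (Finite 0) (lower_density A) -> Rbar_lt (Finite 0) (lower_density B).
Proof.
  intros H HA; eapply Rbar_lt_le_trans; [apply HA|]; apply LimInf_le.
  exists 1; intros N HN; unfold Rdiv.
  apply Rmult_le_compat_r; [left; apply Rinv_0_lt_compat, lt_0_INR; lia|].
  apply le_INR, count_mono; auto.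
Qed.

End Counting.

(** * Visit times *)

Section VisitTimes.
Variable rad : nat -> nat.
Local Open Scope nat_scope.

(* The factor [2 ^ (l + 4) * (2 * rad l + 1)] makes the multiples of all higher periods,
   thickened by their radii, fill at most a quarter of the multiples of [visit_period l]. *)
Fixpoint visit_period (l : nat) : nat :=
  match l with
  | O => 16 * (2 * rad 0 + 1)
  | S l' => 2 ^ (l' + 5) * (2 * rad (S l') + 1) * visit_period l'
  end.

Definition near_multiple (l k : nat) : Prop :=
  exists m, 1 <= m /\ m * visit_period l <= k + rad l /\ k <= m * visit_period l + rad l.

(* The times at which the orbit is to approximate target [l]. *)
Definition visit (l k : nat) : Prop :=
  1 <= k /\ k mod visit_period l = 0 /\ forall l', l < l' -> ~ near_multiple l' k.

Lemma pow2_ge_1 e : 1 <= 2 ^ e.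
Proof. apply (Nat.pow_le_mono_r 2 0); lia. Qed.

Lemma visit_period_ge l : 2 ^ (l + 4) * (2 * rad l + 1) <= visit_period l.
Proof.
  induction l as [|l IH]; simpl visit_period; [simpl; lia|].
  pose proof (pow2_ge_1 (l + 4)).
  replace (S l + 4) with (l + 5) by lia; nia.
Qed.

Lemma visit_period_rad l : 2 * rad l + 1 <= visit_period l.
Proof. pose proof (visit_period_ge l); pose proof (pow2_ge_1 (l + 4)); nia. Qed.

Lemma visit_period_gt l : l < visit_period l.
Proof.
  pose proof (visit_period_ge l); pose proof (Nat.pow_gt_lin_r 2 l ltac:(lia)).
  pose proof (Nat.pow_le_mono_r 2 l (l + 4) ltac:(lia) ltac:(lia)); nia.
Qed.

Lemma visit_period_mono l l' : l <= l' -> visit_period l <= visit_period l'.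
Proof. induction 1; simpl visit_period; [lia|]. pose proof (pow2_ge_1 (m + 5)); nia. Qed.

Lemma visit_period_gap l l' : l < l' ->
  2 ^ (l' + 4) * (2 * rad l' + 1) * visit_period l <= visit_period l'.
Proof.
  intros H; destruct l' as [|l'']; [lia|]; simpl visit_period.
  replace (S l'' + 4) with (l'' + 5) by lia.
  apply Nat.mul_le_mono_l, visit_period_mono; lia.
Qed.

Lemma visit_pos l k : visit l k -> 1 <= k.
Proof. now intros []. Qed.

Lemma visit_rad l k : visit l k -> rad l <= k.
Proof.
  intros [Hk [Hm _]]; pose proof (visit_period_rad l).
  destruct (Compare_dec.le_lt_dec (visit_period l) k); [lia|].
  rewrite Nat.mod_small in Hm; lia.
Qed.

Lemma multiple_gap P k k' : k mod P = 0 -> k' mod P = 0 -> k < k' -> k + P <= k'.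
Proof.
  intros H H' Hlt.
  pose proof (Nat.div_mod_eq k P) as E; pose proof (Nat.div_mod_eq k' P) as E'.
  rewrite H, Nat.add_0_r in E; rewrite H', Nat.add_0_r in E'.
  assert (k / P < k' / P) by (destruct (Compare_dec.le_lt_dec (k' / P) (k / P)); [nia|auto]).
  nia.
Qed.

Lemma visit_far_from_higher l l' k k' : l < l' -> visit l k -> visit l' k' ->
  k + rad l' < k' \/ k' + rad l' < k.
Proof.
  intros Hl [_ [_ Hfar]] [Hk' [Hm' _]].
  pose proof (Nat.div_mod_eq k' (visit_period l')) as E; rewrite Hm', Nat.add_0_r in E.
  destruct (Compare_dec.lt_dec (k + rad l') k'), (Compare_dec.lt_dec (k' + rad l') k); auto.
  exfalso; apply (Hfar l' Hl); exists (k' / visit_period l'); repeat split; [|nia|nia].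
  destruct (k' / visit_period l'); lia.
Qed.

Lemma visit_unique l l' k : visit l k -> visit l' k -> l = l'.
Proof.
  intros H H'; destruct (Nat.lt_trichotomy l l') as [h|[h|h]]; auto; exfalso.
  - destruct (visit_far_from_higher l l' k k h H H'); lia.
  - destruct (visit_far_from_higher l' l k k h H' H); lia.
Qed.

Lemma count_near_multiples P r N : 1 <= P ->
  (INR (count_upto (fun k => exists m, (1 <= m /\ m * P <= k + r /\ k <= m * P + r)%nat) N)
   <= INR ((N + r) / P) * INR (2 * r + 1))%R.
Proof.
  intros HP.
  set (K := (N + r) / P).
  eapply Rle_trans.
  { apply le_INR, (count_mono _ (fun k => exists i, i < K /\
      (fun i k => S i * P - r <= k <= S i * P - r + 2 * r) i k)).
    intros k Hk [m [Hm [H1 H2]]]; exists (m - 1); split.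
    - enough (m <= K) by lia. apply Nat.div_le_lower_bound; lia.
    - replace (S (m - 1)) with m by lia; lia. }
  eapply Rle_trans; [apply count_exists|].
  rewrite <- rsum_const; apply rsum_le; intros i _.
  apply le_INR, (count_window _ (S i * P - r)); auto.
Qed.

Lemma near_count_term_bound l l' N : l < l' ->
  (INR ((N + rad l') / visit_period l') * INR (2 * rad l' + 1)
   <= INR N / (8 * INR (visit_period l)) * (/ 2) ^ l')%R.
Proof.
  intros Hl.
  set (q := (N + rad l') / visit_period l').
  pose proof (visit_period_gap l l' Hl) as Hgap.
  pose proof (visit_period_rad l'); pose proof (visit_period_rad l).
  assert (Hnat : q * (2 * rad l' + 1) * (2 ^ (l' + 4) * visit_period l) <= 2 * N).
  { pose proof (Nat.Div0.mul_div_le (N + rad l') (visit_period l')) as Hq; fold q in Hq.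
    destruct q as [|q']; [lia|]. nia. }
  apply le_INR in Hnat; rewrite !mult_INR, pow_INR, pow_add in Hnat.
  replace (INR 2) with 2%R in Hnat by (simpl; ring).
  set (X := (INR q * INR (2 * rad l' + 1))%R) in *.
  assert (0 < INR (visit_period l))%R by (apply lt_0_INR; lia).
  assert (0 < 2 ^ l')%R by (apply pow_lt; lra).
  rewrite pow_inv.
  apply Rmult_le_reg_r with (8 * INR (visit_period l) * 2 ^ l')%R; [nra|].
  replace (INR N / (8 * INR (visit_period l)) * / 2 ^ l' * (8 * INR (visit_period l) * 2 ^ l'))%R
    with (INR N) by (field; lra).
  replace (X * (2 ^ l' * 2 ^ 4 * INR (visit_period l)))%R with
    (2 * (X * (8 * INR (visit_period l) * 2 ^ l')))%R in Hnat by (simpl; ring).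
  lra.
Qed.

Lemma near_multiple_lt l k : near_multiple l k -> l < 2 * k.
Proof.
  intros [m [Hm [H1 H2]]].
  pose proof (visit_period_gt l); pose proof (visit_period_rad l); nia.
Qed.

Lemma multiple_not_visit l k : 1 <= k -> k mod visit_period l = 0 -> ~ visit l k ->
  exists l', l < l' /\ near_multiple l' k.
Proof.
  intros Hk Hm Hv; apply NNPP; intros Hno; apply Hv; repeat split; auto.
  intros l' Hl' Hnear; apply Hno; eauto.
Qed.

Lemma count_near_higher_le l N :
  (INR (count_upto (fun k => exists l', (l' < 2 * N)%nat /\ (l < l')%nat /\ near_multiple l' k) N)
   <= INR N / (4 * INR (visit_period l)))%R.
Proof.
  set (c := (INR N / (8 * INR (visit_period l)))%R).
  assert (0 < INR (visit_period l))%R by (apply lt_0_INR; pose proof (visit_period_rad l); lia).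
  assert (0 <= c)%R by (apply Rdiv_le_0_compat; [apply pos_INR|lra]).
  replace (INR N / (4 * INR (visit_period l)))%R with (c * 2)%R by (unfold c; field; lra).
  eapply Rle_trans; [apply (count_exists (fun l' k => l < l' /\ near_multiple l' k))|].
  eapply Rle_trans; [apply (rsum_le _ (fun l' => c * (/ 2) ^ l')%R)|].
  - intros l' _; destruct (Compare_dec.lt_dec l l') as [h|h].
    + eapply Rle_trans; [|apply (near_count_term_bound l l' N h)].
      eapply Rle_trans; [|apply count_near_multiples; pose proof (visit_period_rad l'); lia].
      apply le_INR, count_mono; intros k _ [_ Hk]; exact Hk.
    + rewrite count_zero; [simpl; apply Rmult_le_pos; auto; apply pow_le; lra|].
      intros k _ [h' _]; lia.
  - rewrite rsum_scal; apply Rmult_le_compat_l; auto.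
    pose proof (rsum_geom (/ 2) (2 * N)) as Hg; pose proof (pow_lt (/ 2) (2 * N) ltac:(lra)).
    replace (1 - / 2)%R with (/ 2)%R in Hg by field; lra.
Qed.

Lemma count_visit_ge l N :
  (INR N / INR (visit_period l) - 1 - INR N / (4 * INR (visit_period l))
   <= INR (count_upto (visit l) N))%R.
Proof.
  set (P := visit_period l).
  assert (HP : 0 < P) by (pose proof (visit_period_rad l); unfold P; lia).
  assert (Hsplit : N / P <= count_upto (visit l) N
                   + count_upto (fun k => exists l', l' < 2 * N /\ l < l' /\ near_multiple l' k) N).
  { eapply Nat.le_trans; [apply (count_multiples_ge P N HP)|].
    eapply Nat.le_trans; [|apply count_or]; apply count_mono.
    intros k Hk Hm; destruct (classic (visit l k)) as [|Hv]; [left; auto|right].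
    destruct (multiple_not_visit l k) as [l' [Hl' Hnear]]; try lia; auto.
    exists l'; pose proof (near_multiple_lt l' k Hnear); repeat split; auto; lia. }
  apply le_INR in Hsplit; rewrite plus_INR in Hsplit.
  pose proof (count_near_higher_le l N) as Hnear; fold P in Hnear.
  pose proof (INR_div_ge N P HP); lra.
Qed.

Lemma visit_density l : Rbar_lt (Finite 0) (lower_density (visit l)).
Proof.
  set (P := visit_period l).
  assert (HP : (0 < INR P)%R)
    by (apply lt_0_INR; pose proof (visit_period_rad l) as Hr; fold P in Hr; lia).
  apply lower_density_pos_of_bound with (c := (/ (2 * INR P))%R) (N0 := 4 * P);
    [apply Rinv_0_lt_compat; lra|].
  intros N HN; eapply Rle_trans; [|apply count_visit_ge]; fold P.
  apply le_INR in HN; rewrite mult_INR in HN; simpl INR in HN.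
  apply Rmult_le_reg_r with (4 * INR P)%R; [lra|].
  field_simplify; lra.
Qed.

Hypothesis rad_mono : forall a b, a <= b -> rad a <= rad b.

Lemma visit_separated l l' k k' : visit l k -> visit l' k' -> k < k' ->
  rad l <= k' - k /\ rad l' <= k' - k.
Proof.
  intros H H' Hlt; destruct (Nat.lt_trichotomy l l') as [h|[<-|h]].
  - pose proof (rad_mono l l' ltac:(lia)).
    destruct (visit_far_from_higher l l' k k' h H H'); lia.
  - pose proof (multiple_gap _ _ _ (proj1 (proj2 H)) (proj1 (proj2 H')) Hlt).
    pose proof (visit_period_rad l); lia.
  - pose proof (rad_mono l' l ltac:(lia)).
    destruct (visit_far_from_higher l' l k' k h H' H); lia.
Qed.

End VisitTimes.

(** * The frequently hypercyclic vector *)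

Section NatPowers.
Local Open Scope nat_scope.
Variable n : nat.
Hypothesis Hn : 1 <= n.

Lemma pow_ge_1 d : 1 <= n ^ d.
Proof. apply (Nat.pow_le_mono_r n 0); lia. Qed.

Lemma pow_S_sub d : n ^ S d - n ^ d = (n - 1) * n ^ d.
Proof. simpl; rewrite Nat.mul_sub_distr_r; lia. Qed.

Lemma generation_shift g j i m : n ^ g <= i < n ^ S g -> m < n ^ j ->
  n ^ (g + j) <= i * n ^ j + m < n ^ S (g + j).
Proof.
  intros Hi Hm; rewrite Nat.pow_add_r.
  replace (S (g + j)) with (S g + j) by lia; rewrite Nat.pow_add_r.
  split; [nia|].
  assert ((i + 1) * n ^ j <= n ^ S g * n ^ j) by (apply Nat.mul_le_mono_r; lia); nia.
Qed.

Lemma rsum_generations (f : nat -> R) D :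
  rsum f (n ^ D) = (f 0%nat + rsum (fun g => rsum (fun t => f (n ^ g + t)%nat) (n ^ S g - n ^ g)) D)%R.
Proof.
  induction D as [|D IH]; [simpl; ring|].
  replace (n ^ S D) with (n ^ D + (n ^ S D - n ^ D)) at 1 by (simpl; nia).
  rewrite rsum_add, IH; cbn [rsum]; ring.
Qed.

End NatPowers.

Lemma generation_unique n d d' m : (2 <= n)%nat ->
  (n ^ d <= m < n ^ S d)%nat -> (n ^ d' <= m < n ^ S d')%nat -> d = d'.
Proof.
  intros Hn H H'; destruct (Nat.lt_trichotomy d d') as [h|[h|h]]; auto; exfalso.
  - assert (n ^ S d <= n ^ d')%nat by (apply Nat.pow_le_mono_r; lia); lia.
  - assert (n ^ S d' <= n ^ d)%nat by (apply Nat.pow_le_mono_r; lia); lia.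
Qed.

Lemma rsum_le_of_generation_bound n (f : nat -> R) c : (2 <= n)%nat ->
  (forall i, 0 <= f i)%R -> f 0%nat = 0%R ->
  (forall g, rsum (fun t => f (n ^ g + t)%nat) (n ^ S g - n ^ g) <= c * (3 / 4) ^ g)%R ->
  forall N, (rsum f N <= 4 * c)%R.
Proof.
  intros Hn Hf H0 Hg N.
  assert (0 <= c)%R.
  { specialize (Hg 0%nat); rewrite pow_O, Rmult_1_r in Hg.
    eapply Rle_trans; [|apply Hg]; apply rsum_nonneg; auto. }
  eapply Rle_trans;
    [apply (rsum_le_mono f N (n ^ N)); auto; apply Nat.lt_le_incl, Nat.pow_gt_lin_r; lia|].
  rewrite rsum_generations, H0, Rplus_0_l by lia.
  eapply Rle_trans; [apply (rsum_le _ (fun g => c * (3 / 4) ^ g)%R); auto|].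
  rewrite rsum_scal, (Rmult_comm 4 c); apply Rmult_le_compat_l; auto.
  pose proof (rsum_geom (3 / 4) N) as Hgeom; pose proof (pow_lt (3 / 4) N ltac:(lra)).
  replace (1 - 3 / 4)%R with (/ 4)%R in Hgeom by field; lra.
Qed.

Section EnergyInequality.
Local Open Scope R_scope.

Lemma window_energy_le (q M t : R) (g D G' : nat) :
  2 <= q -> 0 <= M -> 0 < t -> (g < D + G')%nat ->
  M ^ 2 * q ^ (G' + 2) * (4 / 3) ^ G' * (4 / t) <= (3 / 2) ^ D ->
  M ^ 2 * (q ^ (g + 1) * (4 / 3) ^ g) * q ^ 2 <= t / 4 * (q ^ D * q ^ D).
Proof.
  intros Hq HM Ht Hg HA.
  set (A := M ^ 2 * q ^ (G' + 2) * (4 / 3) ^ G') in HA.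
  assert (Hqp : forall k, 0 < q ^ k) by (intros; apply pow_lt; lra).
  assert (H43 : forall k, 0 < (4 / 3) ^ k) by (intros; apply pow_lt; lra).
  assert (HA' : A <= t / 4 * (3 / 2) ^ D).
  { apply Rmult_le_reg_r with (4 / t); [apply Rdiv_lt_0_compat; lra|].
    replace (t / 4 * (3 / 2) ^ D * (4 / t)) with ((3 / 2) ^ D) by (field; lra); exact HA. }
  assert (H2q : (3 / 2) ^ D * (4 / 3) ^ D * q ^ D <= q ^ D * q ^ D).
  { rewrite <- (Rpow_mult_distr (3 / 2) (4 / 3) D); replace (3 / 2 * (4 / 3)) with 2 by field.
    apply Rmult_le_compat_r; [left; auto|apply pow_incr; lra]. }
  apply Rle_trans with (M ^ 2 * (q ^ (D + G') * (4 / 3) ^ (D + G')) * q ^ 2).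
  { apply Rmult_le_compat_r; [left; auto|apply Rmult_le_compat_l; [apply pow2_ge_0|]].
    apply Rmult_le_compat; try (left; apply Hqp || apply H43); apply Rle_pow; lra || lia. }
  replace (M ^ 2 * (q ^ (D + G') * (4 / 3) ^ (D + G')) * q ^ 2) with (A * (q ^ D * (4 / 3) ^ D))
    by (unfold A; rewrite !pow_add; ring).
  apply Rle_trans with (t / 4 * (3 / 2) ^ D * (q ^ D * (4 / 3) ^ D)).
  { apply Rmult_le_compat_r; [specialize (Hqp D); specialize (H43 D); nra|auto]. }
  replace (t / 4 * (3 / 2) ^ D * (q ^ D * (4 / 3) ^ D))
    with (t / 4 * ((3 / 2) ^ D * (4 / 3) ^ D * q ^ D)) by ring.
  apply Rmult_le_compat_l; [lra|auto].
Qed.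

(* A window of length [G'] owned by a visit [D] steps later has entries of size at most
   [M / q ^ (D - 1)]; as [D] dominates the window data, generation [g] carries energy
   decaying like [(3/4) ^ g]. *)
Lemma spread_energy_bound (q M t : R) (g D G' : nat) :
  2 <= q -> 0 <= M -> 0 < t -> (1 <= D)%nat -> (g < D + G')%nat ->
  M ^ 2 * q ^ (G' + 2) * (4 / 3) ^ G' * (4 / t) <= (3 / 2) ^ D ->
  q ^ (g + 1) * (M / q ^ (D - 1)) ^ 2 <= t / 4 * (3 / 4) ^ g.
Proof.
  intros Hq HM Ht HD Hg HA.
  pose proof (window_energy_le q M t g D G' Hq HM Ht Hg HA) as Hwin.
  assert (Hqp : forall k, 0 < q ^ k) by (intros; apply pow_lt; lra).
  set (Q := q ^ (D - 1) * q ^ (D - 1) * q ^ 2).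
  assert (HQ : q ^ D * q ^ D = Q) by (unfold Q; replace D with (S (D - 1)) at 1 2 by lia; simpl; ring).
  assert (Hpos : 0 < (4 / 3) ^ g * Q).
  { pose proof (pow_lt (4 / 3) g ltac:(lra)); pose proof (Hqp (D - 1)%nat); pose proof (Hqp 2%nat).
    unfold Q; apply Rmult_lt_0_compat; [|apply Rmult_lt_0_compat; [apply Rmult_lt_0_compat|]]; auto. }
  apply Rmult_le_reg_r with ((4 / 3) ^ g * Q); auto.
  replace (t / 4 * (3 / 4) ^ g * ((4 / 3) ^ g * Q))
    with (t / 4 * Q * ((3 / 4) ^ g * (4 / 3) ^ g)) by ring.
  rewrite <- (Rpow_mult_distr (3 / 4) (4 / 3) g); replace (3 / 4 * (4 / 3)) with 1 by field.
  rewrite pow1, Rmult_1_r.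
  replace (q ^ (g + 1) * (M / q ^ (D - 1)) ^ 2 * ((4 / 3) ^ g * Q))
    with (M ^ 2 * (q ^ (g + 1) * (4 / 3) ^ g) * q ^ 2)
    by (unfold Q; field; apply Rgt_not_eq, Hqp).
  now rewrite <- HQ.
Qed.

Lemma pow_shift_div (q M : R) j j' : q <> 0 -> (j < j')%nat ->
  q ^ j * (M / q ^ (j' - 1)) = M / q ^ (j' - j - 1).
Proof.
  intros Hq Hj; replace (j' - 1)%nat with (j + (j' - j - 1))%nat by lia.
  rewrite pow_add; field; split; apply pow_nonzero; auto.
Qed.

Lemma Cmod_scale_inv_le (K K' : nat) (z : C) (B : R) : (0 < K' <= K)%nat -> Cmod z <= B ->
  Cmod (RtoC (/ INR K) * z) <= B / INR K'.
Proof.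
  intros HK Hz.
  assert (0 < INR K') by (apply lt_0_INR; lia).
  assert (INR K' <= INR K) by (apply le_INR; lia).
  pose proof (Cmod_ge_0 z).
  rewrite Cmod_mult, Cmod_R, Rabs_pos_eq by (left; apply Rinv_0_lt_compat; lra).
  apply Rle_trans with (/ INR K' * Cmod z);
    [apply Rmult_le_compat_r; auto; apply Rinv_le_contravar; auto|].
  unfold Rdiv; rewrite Rmult_comm; apply Rmult_le_compat_r; [left; apply Rinv_0_lt_compat|]; auto.
Qed.

End EnergyInequality.

Section Construction.
Local Open Scope nat_scope.

Variables (n : nat) (x : nat -> nat -> C) (G : nat -> nat) (rad : nat -> nat).
Hypotheses (Hn : 2 <= n)
  (rad_mono : forall a b, a <= b -> rad a <= rad b)
  (rad_window : forall l, G l < rad l)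
  (x_sum0 : forall l, csum (x l) (n ^ G l) = RtoC 0)
  (x_supp : forall l i, n ^ G l <= i -> x l i = RtoC 0).

Definition owns (d j l : nat) : Prop := visit rad l j /\ j <= d + 1 /\ d < j + G l.

Lemma owns_unique d j l j' l' : owns d j l -> owns d j' l' -> j = j' /\ l = l'.
Proof.
  intros [H1 [H2 H3]] [H1' [H2' H3']].
  assert (j = j') as <-.
  { destruct (Nat.lt_trichotomy j j') as [h|[h|h]]; auto; exfalso.
    - destruct (visit_separated rad rad_mono l l' j j' H1 H1' h).
      pose proof (rad_window l); lia.
    - destruct (visit_separated rad rad_mono l' l j' j H1' H1 h).
      pose proof (rad_window l'); lia. }
  split; auto; eapply visit_unique; eauto.
Qed.

Lemma owns_first j l : visit rad l j -> owns (j - 1) j l.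
Proof. intros H; pose proof (visit_pos _ _ _ H); split; [auto|lia]. Qed.

(* On
   generation [j - 1] the value [x l 0] is spread evenly, so that the block of [T ^ j y] at
   [0] picks it up; on generation [g + j] every [x l i], [i] in generation [g], is repeated
   [n ^ j] times with weight [n ^ -j], so that the block of [T ^ j y] at [i] is [x l i]. *)
Definition y_coef (d j l m : nat) : C :=
  if Nat.eq_dec d (j - 1) then (RtoC (/ INR ((n - 1) * n ^ (j - 1))) * x l 0)%C
  else (RtoC (/ INR (n ^ j)) * x l (m / n ^ j))%C.

Definition in_generation (d m : nat) : Prop := n ^ d <= m < n ^ S d.

Definition yvec (m : nat) : C :=
  match excluded_middle_informative
          (exists p : nat * nat * nat,
             in_generation (fst (fst p)) m /\ owns (fst (fst p)) (snd (fst p)) (snd p))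
  with
  | left H => let '(d, j, l) := proj1_sig (constructive_indefinite_description _ H) in y_coef d j l m
  | right _ => RtoC 0
  end.

Lemma yvec_owned d j l m : in_generation d m -> owns d j l -> yvec m = y_coef d j l m.
Proof.
  intros Hm Ho; unfold yvec; destruct excluded_middle_informative as [H|H].
  - destruct (constructive_indefinite_description _ H) as [[[d' j'] l'] [Hm' Ho']]; simpl in *.
    assert (d = d') as <- by (apply (generation_unique n d d' m); auto).
    now destruct (owns_unique d j l j' l' Ho Ho') as [<- <-].
  - exfalso; apply H; now exists (d, j, l).
Qed.

Lemma yvec_unowned d m : in_generation d m -> (forall j l, ~ owns d j l) -> yvec m = RtoC 0.
Proof.
  intros Hm Ho; unfold yvec; destruct excluded_middle_informative as [H|H]; auto.
  destruct (constructive_indefinite_description _ H) as [[[d' j'] l'] [Hm' Ho']]; simpl in *.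
  assert (d = d') as <- by (apply (generation_unique n d d' m); auto).
  exfalso; eapply Ho; eauto.
Qed.

Lemma yvec_0 : yvec 0 = RtoC 0.
Proof.
  unfold yvec; destruct excluded_middle_informative as [H|]; auto.
  exfalso; destruct H as [[[d j] l] [Hm _]].
  pose proof (pow_ge_1 n ltac:(lia) d); unfold in_generation in Hm; simpl in Hm; lia.
Qed.

Definition ypartial (d : nat) : C := csum yvec (n ^ d).

Definition ygeneration (d : nat) : C := csum (fun t => yvec (n ^ d + t)) (n ^ S d - n ^ d).

Lemma ypartial_S d : ypartial (S d) = (ypartial d + ygeneration d)%C.
Proof.
  unfold ypartial, ygeneration.
  replace (n ^ S d) with (n ^ d + (n ^ S d - n ^ d)) at 1 by (simpl; nia).
  apply csum_add.
Qed.

Lemma ygeneration_unowned d : (forall j l, ~ owns d j l) -> ygeneration d = RtoC 0.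
Proof.
  intros H; apply csum_zero; intros t Ht.
  apply (yvec_unowned d); auto; unfold in_generation; lia.
Qed.

Lemma ygeneration_first j l : visit rad l j -> ygeneration (j - 1) = x l 0.
Proof.
  intros Hv; unfold ygeneration; rewrite pow_S_sub by lia.
  rewrite <- (csum_const_inv ((n - 1) * n ^ (j - 1)) (x l 0));
    [|pose proof (pow_ge_1 n ltac:(lia) (j - 1)); nia].
  apply csum_ext; intros t Ht.
  rewrite (yvec_owned (j - 1) j l); [|unfold in_generation; rewrite <- pow_S_sub in Ht by lia; lia|].
  - unfold y_coef; destruct (Nat.eq_dec (j - 1) (j - 1)); [auto|lia].
  - now apply owns_first.
Qed.

Lemma ygeneration_inner d j l : owns d j l -> j <= d ->
  ygeneration d = csum (fun i => x l (n ^ (d - j) + i)) (n ^ S (d - j) - n ^ (d - j)).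
Proof.
  intros Ho Hjd; unfold ygeneration.
  set (g := d - j); assert (Hd : d = g + j) by (unfold g; lia).
  pose proof (visit_pos _ _ _ (proj1 Ho)) as Hj.
  pose proof (pow_ge_1 n ltac:(lia) j) as Hpj.
  assert (E : n ^ S d - n ^ d = (n ^ S g - n ^ g) * n ^ j)
    by (rewrite !pow_S_sub, Hd, Nat.pow_add_r by lia; ring).
  rewrite E, csum_block; apply csum_ext; intros i Hi.
  rewrite <- (csum_const_inv (n ^ j) (x l (n ^ g + i))) by lia.
  apply csum_ext; intros s Hs.
  assert (Hgen : in_generation d (n ^ d + (i * n ^ j + s))).
  { assert ((i + 1) * n ^ j <= n ^ S d - n ^ d) by (rewrite E; apply Nat.mul_le_mono_r; lia).
    assert (n ^ d <= n ^ S d) by (apply Nat.pow_le_mono_r; lia).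
    unfold in_generation; nia. }
  rewrite (yvec_owned d j l) by auto; unfold y_coef.
  destruct (Nat.eq_dec d (j - 1)); [lia|].
  do 2 f_equal.
  replace (n ^ d + (i * n ^ j + s)) with ((n ^ g + i) * n ^ j + s)
    by (rewrite Hd, Nat.pow_add_r; ring).
  rewrite Nat.div_add_l, Nat.div_small by lia; lia.
Qed.

Lemma ypartial_window j l g : visit rad l j -> g <= G l ->
  ypartial (j + g) = (ypartial (j - 1) + csum (x l) (n ^ g))%C.
Proof.
  intros Hv; pose proof (visit_pos _ _ _ Hv) as Hj.
  induction g as [|g IH]; intros Hg.
  - replace (j + 0) with (S (j - 1)) by lia.
    rewrite ypartial_S, (ygeneration_first j l Hv); simpl; f_equal; ring.
  - replace (j + S g) with (S (j + g)) by lia.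
    rewrite ypartial_S, IH, (ygeneration_inner (j + g) j l) by (try split; auto; lia).
    replace (j + g - j) with g by lia.
    replace (n ^ S g) with (n ^ g + (n ^ S g - n ^ g)) at 2 by (simpl; nia).
    rewrite csum_add; ring.
Qed.

Lemma visit_start_unowned j l j' l' : visit rad l j -> visit rad l' j' ->
  ~ (j' - 1 < j - 1 < j' + G l').
Proof.
  intros Hv Hv' [h1 h2].
  assert (Ho : owns (j - 1) j' l') by (split; [auto|lia]).
  destruct (owns_unique _ _ _ _ _ Ho (owns_first j l Hv)); lia.
Qed.

(* Each completed window adds [csum (x l) (n ^ G l) = 0] to the partial sums of [y]. *)
Lemma ypartial_zero d : (forall j l, visit rad l j -> ~ (j - 1 < d < j + G l)) -> ypartial d = RtoC 0.
Proof.
  induction d as [d IH] using (well_founded_induction Wf_nat.lt_wf); intros Hd.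
  destruct d as [|d'].
  - unfold ypartial; simpl; rewrite yvec_0; ring.
  - destruct (classic (exists j l, owns d' j l)) as [[j [l Ho]]|Hno].
    + destruct Ho as [Hv [h1 h2]].
      assert (E : S d' = j + G l).
      { destruct (Compare_dec.le_lt_dec (j + G l) (S d')); [lia|].
        exfalso; apply (Hd j l Hv); pose proof (visit_pos _ _ _ Hv); lia. }
      rewrite E, (ypartial_window j l (G l) Hv (le_n _)), x_sum0, IH; [ring|lia|].
      intros j' l' Hv'; now apply (visit_start_unowned j l).
    + rewrite ypartial_S, ygeneration_unowned, IH; [ring|lia| |].
      * intros j l Hv [h1 h2]; apply Hno; exists j, l; split; [auto|lia].
      * intros j l Ho; apply Hno; eauto.
Qed.

Lemma ypartial_visit j l : visit rad l j -> ypartial j = x l 0.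
Proof.
  intros Hv; replace j with (j + 0) at 1 by lia.
  rewrite (ypartial_window j l 0 Hv (Nat.le_0_l _)), ypartial_zero; [simpl; ring|].
  intros j' l' Hv'; now apply (visit_start_unowned j l).
Qed.

Definition block_sum (j i : nat) : C := csum (fun m => yvec (i * n ^ j + m)) (n ^ j).

Lemma block_sum_0 j l : visit rad l j -> block_sum j 0 = x l 0.
Proof.
  intros Hv; rewrite <- (ypartial_visit j l Hv).
  apply csum_ext; intros; f_equal.
Qed.

Lemma block_sum_owned j l g i : visit rad l j -> in_generation g i -> g < G l ->
  block_sum j i = x l i.
Proof.
  intros Hv Hi Hg; pose proof (visit_pos _ _ _ Hv).
  pose proof (pow_ge_1 n ltac:(lia) j).
  unfold block_sum; rewrite <- (csum_const_inv (n ^ j) (x l i)) by lia.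
  apply csum_ext; intros m Hm.
  rewrite (yvec_owned (g + j) j l).
  - unfold y_coef; destruct (Nat.eq_dec (g + j) (j - 1)); [lia|].
    rewrite Nat.div_add_l, Nat.div_small by lia; do 2 f_equal; lia.
  - apply generation_shift; auto; lia.
  - split; [auto|lia].
Qed.

Lemma block_sum_unowned j g i : in_generation g i -> (forall j' l', ~ owns (g + j) j' l') ->
  block_sum j i = RtoC 0.
Proof.
  intros Hi Hno; apply csum_zero; intros m Hm.
  apply (yvec_unowned (g + j)); auto; apply generation_shift; auto; lia.
Qed.

Variables (M tol : nat -> R).
Hypotheses (x_bound : forall l i, (Cmod (x l i) <= M l)%R)
  (tol_pos : forall l, (0 < tol l)%R) (tol_le_1 : forall l, (tol l <= 1)%R)
  (rad_large : forall l l' D, rad l <= D -> rad l' <= D ->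
     (M l' ^ 2 * INR n ^ (G l' + 2) * (4 / 3) ^ G l' * (4 / tol l) <= (3 / 2) ^ D)%R).

Lemma M_nonneg l : (0 <= M l)%R.
Proof. eapply Rle_trans; [apply Cmod_ge_0|apply (x_bound l 0)]. Qed.

Lemma INR_n_ge_2 : (2 <= INR n)%R.
Proof. replace 2%R with (INR 2) by (simpl; ring); apply le_INR; auto. Qed.

Lemma yvec_bound d j l m : owns d j l -> in_generation d m ->
  (Cmod (yvec m) <= M l / INR n ^ (j - 1))%R.
Proof.
  intros Ho Hm; rewrite (yvec_owned d j l m Hm Ho), <- pow_INR; unfold y_coef.
  pose proof (visit_pos _ _ _ (proj1 Ho)).
  pose proof (pow_ge_1 n ltac:(lia) (j - 1)).
  destruct (Nat.eq_dec d (j - 1)); apply Cmod_scale_inv_le; auto; split; try lia.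
  - nia.
  - apply Nat.pow_le_mono_r; lia.
Qed.

Lemma generation_size_le g : (INR (n ^ S g - n ^ g) <= INR n ^ (g + 1))%R.
Proof. rewrite <- pow_INR; apply le_INR; rewrite Nat.add_1_r; lia. Qed.

Lemma rsum_generation_le (f : nat -> R) g B :
  (forall t, t < n ^ S g - n ^ g -> (0 <= f t <= B)%R) ->
  (rsum f (n ^ S g - n ^ g) <= INR n ^ (g + 1) * B)%R.
Proof.
  intros Hf; eapply Rle_trans; [apply (rsum_le _ (fun _ => B)); intros; apply Hf; auto|].
  rewrite rsum_const; apply Rmult_le_compat_r; [|apply generation_size_le].
  destruct (Nat.eq_dec (n ^ S g - n ^ g) 0) as [E|E].
  - pose proof (pow_ge_1 n ltac:(lia) g); rewrite pow_S_sub in E; nia.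
  - destruct (Hf 0 ltac:(lia)); lra.
Qed.

Lemma yvec_generation_energy d :
  (rsum (fun t => Cmod (yvec (n ^ d + t)) ^ 2) (n ^ S d - n ^ d) <= (3 / 4) ^ d)%R.
Proof.
  destruct (classic (exists j l, owns d j l)) as [[j [l Ho]]|Hno].
  - eapply Rle_trans.
    { apply (rsum_generation_le _ d ((M l / INR n ^ (j - 1)) ^ 2)); intros t Ht.
      split; [apply pow2_ge_0|apply pow_incr; split; [apply Cmod_ge_0|]].
      apply (yvec_bound d); auto; unfold in_generation; lia. }
    destruct Ho as [Hv [h1 h2]].
    eapply Rle_trans; [apply (spread_energy_bound _ _ (tol l) d j (G l))|].
    + apply INR_n_ge_2.
    + apply M_nonneg.
    + auto.
    + apply (visit_pos _ _ _ Hv).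
    + lia.
    + apply rad_large; apply (visit_rad _ _ _ Hv).
    + pose proof (pow_lt (3 / 4) d ltac:(lra)); specialize (tol_le_1 l).
      rewrite <- (Rmult_1_l ((3 / 4) ^ d)) at 2; apply Rmult_le_compat_r; lra.
  - rewrite rsum_zero; [left; apply pow_lt; lra|].
    intros t Ht; rewrite (yvec_unowned d), Cmod_0; [simpl; ring|unfold in_generation; lia|].
    intros j l Ho; apply Hno; eauto.
Qed.

Lemma yvec_inH2 : inH2 yvec.
Proof.
  refine (proj1 (series_bounded_partial_sums _ 4 (fun k => pow2_ge_0 _) _)); intros N.
  rewrite <- (Rmult_1_r 4); apply (rsum_le_of_generation_bound n); auto.
  - intros; apply pow2_ge_0.
  - rewrite yvec_0, Cmod_0; simpl; ring.
  - intros g; rewrite Rmult_1_l; apply yvec_generation_energy.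
Qed.

Lemma block_sum_far j l g i j' l' : visit rad l j -> in_generation g i -> G l <= g ->
  owns (g + j) j' l' ->
  j < j' /\ (Cmod (block_sum j i) <= M l' / INR n ^ (j' - j - 1))%R.
Proof.
  intros Hv Hi Hg Ho.
  assert (Hjj : j < j').
  { destruct Ho as [Hv' [h1 h2]].
    destruct (Nat.lt_trichotomy j j') as [h|[<-|h]]; auto; exfalso.
    - assert (l = l') as <- by (eapply visit_unique; eauto); lia.
    - destruct (visit_separated rad rad_mono l' l j' j Hv' Hv h).
      pose proof (rad_window l'); lia. }
  split; auto.
  rewrite <- pow_shift_div by (auto; pose proof INR_n_ge_2; lra).
  unfold block_sum; eapply Rle_trans; [apply Cmod_csum|].
  eapply Rle_trans; [apply (rsum_le _ (fun _ => M l' / INR n ^ (j' - 1))%R)|].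
  - intros m Hm; apply (yvec_bound (g + j)); auto; apply generation_shift; auto; lia.
  - rewrite rsum_const, pow_INR; right; auto.
Qed.

Lemma block_sum_generation_error j l g : visit rad l j ->
  (rsum (fun t => Cmod (block_sum j (n ^ g + t) - x l (n ^ g + t))%C ^ 2) (n ^ S g - n ^ g)
   <= tol l / 4 * (3 / 4) ^ g)%R.
Proof.
  intros Hv.
  assert (HR : (0 <= tol l / 4 * (3 / 4) ^ g)%R)
    by (pose proof (tol_pos l); pose proof (pow_lt (3 / 4) g ltac:(lra)); nra).
  assert (Hi : forall t, t < n ^ S g - n ^ g -> in_generation g (n ^ g + t))
    by (intros; unfold in_generation; lia).
  destruct (Compare_dec.le_lt_dec (G l) g) as [Hgl|Hgl].
  - assert (Hx : forall t, t < n ^ S g - n ^ g -> x l (n ^ g + t) = RtoC 0).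
    { intros t Ht; apply x_supp.
      assert (n ^ G l <= n ^ g) by (apply Nat.pow_le_mono_r; lia); lia. }
    destruct (classic (exists j' l', owns (g + j) j' l')) as [[j' [l' Ho]]|Hno].
    + assert (Hg0 : in_generation g (n ^ g))
        by (pose proof (pow_ge_1 n ltac:(lia) g); unfold in_generation; simpl; nia).
      destruct (block_sum_far j l g (n ^ g) j' l' Hv Hg0 Hgl Ho) as [Hjj _].
      eapply Rle_trans.
      { apply (rsum_generation_le _ g ((M l' / INR n ^ (j' - j - 1)) ^ 2)); intros t Ht.
        split; [apply pow2_ge_0|]; rewrite Hx by auto.
        replace (block_sum j (n ^ g + t) - RtoC 0)%C with (block_sum j (n ^ g + t)) by ring.
        apply pow_incr; split; [apply Cmod_ge_0|].
        exact (proj2 (block_sum_far j l g _ j' l' Hv (Hi t Ht) Hgl Ho)). }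
      destruct Ho as [Hv' [h1 h2]].
      destruct (visit_separated rad rad_mono l l' j j' Hv Hv' Hjj).
      apply spread_energy_bound with (G' := G l'); auto;
        [apply INR_n_ge_2|apply M_nonneg|lia|lia].
    + rewrite rsum_zero; auto; intros t Ht.
      rewrite Hx, (block_sum_unowned j g) by (auto; intros j' l' Ho; apply Hno; eauto).
      replace (RtoC 0 - RtoC 0)%C with (RtoC 0) by ring; rewrite Cmod_0; simpl; ring.
  - rewrite rsum_zero; auto; intros t Ht.
    rewrite (block_sum_owned j l g) by auto.
    replace (x l (n ^ g + t) - x l (n ^ g + t))%C with (RtoC 0) by ring; rewrite Cmod_0; simpl; ring.
Qed.

Lemma block_sum_error j l N : visit rad l j ->
  (rsum (fun i => Cmod (block_sum j i - x l i)%C ^ 2) N <= tol l)%R.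
Proof.
  intros Hv; replace (tol l) with (4 * (tol l / 4))%R by field.
  apply (rsum_le_of_generation_bound n); auto.
  - intros; apply pow2_ge_0.
  - rewrite (block_sum_0 j l Hv); replace (x l 0 - x l 0)%C with (RtoC 0) by ring.
    rewrite Cmod_0; simpl; ring.
  - intros g; now apply block_sum_generation_error.
Qed.

End Construction.

(** * A countable dense family of targets *)

Section ZeroSumTarget.
Local Open Scope nat_scope.
Variables (n : nat) (b : nat -> C) (K E : nat).
Hypotheses (Hn : 2 <= n) (HKE : K <= E).

Definition head_sum : C := csum b (n ^ K).

Definition correction : C := (RtoC (/ INR ((n - 1) * n ^ E)) * head_sum)%C.

Definition in_corr_block (i : nat) : bool := ((n ^ E <=? i) && (i <? n ^ S E))%bool.

(* [T ^ j y] at 0 is a full partial sum of [y], so targets must have vanishing sum; the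
   sum of the head [b] is cancelled by spreading it over the generation [E], which costs
   little in H^2 when [E] is large. *)
Definition zero_sum_target (i : nat) : C :=
  ((if i <? n ^ K then b i else RtoC 0) - (if in_corr_block i then correction else RtoC 0))%C.

Lemma pow_K_le_pow_E : n ^ K <= n ^ E.
Proof. apply Nat.pow_le_mono_r; lia. Qed.

Lemma correction_block_size : n ^ S E - n ^ E = (n - 1) * n ^ E /\ 1 <= (n - 1) * n ^ E.
Proof. rewrite pow_S_sub by lia; split; auto; pose proof (pow_ge_1 n ltac:(lia) E); nia. Qed.

Lemma zero_sum_target_sum : csum zero_sum_target (n ^ S E) = RtoC 0.
Proof.
  pose proof pow_K_le_pow_E; destruct correction_block_size as [Hsize Hpos].
  assert (Ehead : csum (fun i => if i <? n ^ K then b i else RtoC 0) (n ^ S E) = head_sum).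
  { replace (n ^ S E) with (n ^ K + (n ^ S E - n ^ K)) by lia.
    rewrite csum_add, (csum_ext _ b), (csum_zero (fun t => if n ^ K + t <? n ^ K then _ else _));
      [unfold head_sum; ring| |].
    - intros t _; destruct (Nat.ltb_spec (n ^ K + t) (n ^ K)); [lia|auto].
    - intros i Hi; destruct (Nat.ltb_spec i (n ^ K)); [auto|lia]. }
  assert (Ecorr : csum (fun i => if in_corr_block i then correction else RtoC 0) (n ^ S E) = head_sum).
  { replace (n ^ S E) with (n ^ E + (n ^ S E - n ^ E)) at 1 by lia.
    rewrite csum_add, csum_zero, (csum_ext _ (fun _ => correction)), Hsize.
    - unfold correction; rewrite csum_const_inv by lia; ring.
    - intros t Ht; unfold in_corr_block; destruct (Nat.leb_spec (n ^ E) (n ^ E + t)); [|lia].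
      destruct (Nat.ltb_spec (n ^ E + t) (n ^ S E)); [auto|lia].
    - intros i Hi; unfold in_corr_block; destruct (Nat.leb_spec (n ^ E) i); [lia|auto]. }
  unfold zero_sum_target; rewrite csum_minus, Ehead, Ecorr; ring.
Qed.

Lemma zero_sum_target_supp i : n ^ S E <= i -> zero_sum_target i = RtoC 0.
Proof.
  intros Hi; pose proof pow_K_le_pow_E.
  assert (n ^ E <= n ^ S E) by (apply Nat.pow_le_mono_r; lia).
  unfold zero_sum_target, in_corr_block; destruct (Nat.ltb_spec i (n ^ K)); [lia|].
  destruct (Nat.ltb_spec i (n ^ S E)); [lia|]; rewrite Bool.andb_false_r; ring.
Qed.

Lemma zero_sum_target_bound i :
  (Cmod (zero_sum_target i) <= rsum (fun i => Cmod (b i)) (n ^ K) + Cmod head_sum)%R.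
Proof.
  unfold zero_sum_target; eapply Rle_trans; [apply Cmod_triangle|]; rewrite Cmod_opp.
  apply Rplus_le_compat.
  - destruct (Nat.ltb_spec i (n ^ K)).
    + apply (rsum_term_le (fun i => Cmod (b i))); auto; intros; apply Cmod_ge_0.
    + rewrite Cmod_0; apply rsum_nonneg; intros; apply Cmod_ge_0.
  - destruct (in_corr_block i); [|rewrite Cmod_0; apply Cmod_ge_0].
    destruct correction_block_size as [_ Hpos].
    pose proof (Cmod_scale_inv_le ((n - 1) * n ^ E) 1 head_sum (Cmod head_sum) ltac:(lia) (Rle_refl _))
      as Hc.
    simpl INR in Hc; rewrite Rdiv_1_r in Hc; auto.
Qed.

Lemma zero_sum_target_sq_le (x0 : nat -> C) i :
  (Cmod (zero_sum_target i - x0 i)%C ^ 2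
   <= (if i <? n ^ K then Cmod (b i - x0 i)%C ^ 2 else 0)
      + 2 * (if n ^ K <=? i then Cmod (x0 i) ^ 2 else 0)
      + (if in_corr_block i then 2 * Cmod correction ^ 2 else 0))%R.
Proof.
  pose proof pow_K_le_pow_E.
  unfold zero_sum_target; destruct (Nat.ltb_spec i (n ^ K)), (Nat.leb_spec (n ^ K) i); try lia.
  - unfold in_corr_block; destruct (Nat.leb_spec (n ^ E) i); [lia|]; simpl.
    replace (b i - RtoC 0 - x0 i)%C with (b i - x0 i)%C by ring; lra.
  - replace (RtoC 0 - (if in_corr_block i then correction else RtoC 0) - x0 i)%C
      with (- (if in_corr_block i then correction else RtoC 0) - x0 i)%C by ring.
    eapply Rle_trans; [apply Cmod_sub_sq_le|]; rewrite Cmod_opp.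
    destruct (in_corr_block i); [lra|]; rewrite Cmod_0; simpl; lra.
Qed.

Lemma rsum_head_le (f : nat -> R) N : (forall i, (0 <= f i)%R) ->
  (rsum (fun i => if i <? n ^ K then f i else 0%R) N <= rsum f (n ^ K))%R.
Proof.
  intros Hf; eapply Rle_trans; [apply (rsum_supported_le _ 0 (n ^ K))|].
  - intros i; destruct (i <? n ^ K); [auto|lra].
  - intros i [Hi|Hi]; [lia|]; destruct (Nat.ltb_spec i (n ^ K)); [lia|auto].
  - lia.
  - right; rewrite Nat.sub_0_r; apply rsum_ext; intros i Hi.
    destruct (Nat.ltb_spec (0 + i) (n ^ K)); [auto|lia].
Qed.

Lemma rsum_corr_block_le (c : R) N : (0 <= c)%R ->
  (rsum (fun i => if in_corr_block i then c else 0%R) N <= INR ((n - 1) * n ^ E) * c)%R.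
Proof.
  intros Hc; destruct correction_block_size as [Hsize _].
  eapply Rle_trans; [apply (rsum_supported_le _ (n ^ E) (n ^ S E))|].
  - intros i; destruct (in_corr_block i); lra.
  - intros i Hi; unfold in_corr_block.
    destruct (Nat.leb_spec (n ^ E) i), (Nat.ltb_spec i (n ^ S E)); auto; lia.
  - apply Nat.pow_le_mono_r; lia.
  - rewrite (rsum_ext _ (fun _ => c)), rsum_const, Hsize; [lra|].
    intros t Ht; unfold in_corr_block.
    destruct (Nat.leb_spec (n ^ E) (n ^ E + t)), (Nat.ltb_spec (n ^ E + t) (n ^ S E)); auto; lia.
Qed.

Lemma zero_sum_target_error (x0 : nat -> C) N :
  (rsum (fun i => Cmod (zero_sum_target i - x0 i)%C ^ 2) N
   <= rsum (fun i => Cmod (b i - x0 i)%C ^ 2) (n ^ K)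
      + 2 * rsum (fun i => if n ^ K <=? i then Cmod (x0 i) ^ 2 else 0%R) N
      + 2 * Cmod head_sum ^ 2 / INR ((n - 1) * n ^ E))%R.
Proof.
  destruct correction_block_size as [_ Hpos].
  eapply Rle_trans; [apply rsum_le; intros i _; apply (zero_sum_target_sq_le x0 i)|].
  rewrite !rsum_plus, rsum_scal.
  apply Rplus_le_compat; [apply Rplus_le_compat_r, rsum_head_le; intros; apply pow2_ge_0|].
  eapply Rle_trans; [apply rsum_corr_block_le; pose proof (pow2_ge_0 (Cmod correction)); lra|].
  unfold correction; rewrite Cmod_mult, Cmod_R, Rabs_pos_eq.
  - right; field; apply not_0_INR; lia.
  - left; apply Rinv_0_lt_compat, lt_0_INR; lia.
Qed.

End ZeroSumTarget.

Lemma nat_above (r : R) : exists N : nat, (r <= INR N)%R.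
Proof.
  destruct (archimed r) as [h1 _].
  destruct (Z_le_gt_dec 0 (up r)) as [hz|hz].
  - exists (Z.to_nat (up r)); rewrite INR_IZR_INZ, Z2Nat.id by auto; lra.
  - exists 0%nat; simpl; assert (IZR (up r) < 0)%R by (apply IZR_lt; lia); lra.
Qed.

Lemma nat_diff_approx (r : R) : exists a b : nat, (Rabs (INR a - INR b - r) <= 1)%R.
Proof.
  destruct (archimed r) as [h1 h2].
  destruct (Z_le_gt_dec 0 (up r)) as [hz|hz].
  - exists (Z.to_nat (up r)), 0%nat; rewrite INR_IZR_INZ, Z2Nat.id by auto; simpl.
    rewrite Rabs_pos_eq; lra.
  - exists 0%nat, (Z.to_nat (- up r)).
    rewrite (INR_IZR_INZ (Z.to_nat _)), Z2Nat.id, opp_IZR by lia; simpl.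
    rewrite Rabs_pos_eq; lra.
Qed.

(* A natural number [v] codes the point (a - b + i (c - e)) / (D + 1) via Cantor pairing. *)
Definition grid_point (D v : nat) : C :=
  let '(a, v1) := Cantor.of_nat v in
  let '(b, v2) := Cantor.of_nat v1 in
  let '(c, e) := Cantor.of_nat v2 in
  ((INR a - INR b) / (INR D + 1), (INR c - INR e) / (INR D + 1))%R.

Lemma Cmod_sq (w : C) : (Cmod w ^ 2 = fst w ^ 2 + snd w ^ 2)%R.
Proof. unfold Cmod; rewrite pow2_sqrt; auto; destruct w; simpl; nra. Qed.

Lemma grid_point_approx D z : exists v, (Cmod (grid_point D v - z)%C ^ 2 <= 2 / (INR D + 1) ^ 2)%R.
Proof.
  set (d := (INR D + 1)%R); assert (Hd : (1 <= d)%R) by (pose proof (pos_INR D); unfold d; lra).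
  destruct z as [zr zi].
  destruct (nat_diff_approx (zr * d)) as [a [b Hab]], (nat_diff_approx (zi * d)) as [c [e Hce]].
  exists (Cantor.to_nat (a, Cantor.to_nat (b, Cantor.to_nat (c, e)))).
  unfold grid_point; rewrite !Cantor.cancel_of_to; fold d.
  rewrite Cmod_sq; simpl.
  apply Rabs_le_between in Hab; apply Rabs_le_between in Hce.
  replace ((INR a - INR b) / d + - zr)%R with ((INR a - INR b - zr * d) / d)%R by (field; lra).
  replace ((INR c - INR e) / d + - zi)%R with ((INR c - INR e - zi * d) / d)%R by (field; lra).
  set (u := (INR a - INR b - zr * d)%R) in *; set (w := (INR c - INR e - zi * d)%R) in *.
  replace (u / d * (u / d * 1) + w / d * (w / d * 1))%R with ((u * u + w * w) * / (d * (d * 1)))%R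
    by (field; lra).
  unfold Rdiv; apply Rmult_le_compat_r; [left; apply Rinv_0_lt_compat; nra|nra].
Qed.

Fixpoint coord (s i : nat) : nat :=
  match i with
  | O => fst (Cantor.of_nat s)
  | S i' => coord (snd (Cantor.of_nat s)) i'
  end.

Lemma coord_surj (v : nat -> nat) K : exists s, forall i, (i < K)%nat -> coord s i = v i.
Proof.
  revert v; induction K as [|K IH]; intros v; [exists 0%nat; intros; lia|].
  destruct (IH (fun i => v (S i))) as [s Hs].
  exists (Cantor.to_nat (v 0%nat, s)); intros [|i] Hi; cbn [coord]; rewrite Cantor.cancel_of_to; auto.
  apply Hs; lia.
Qed.

Definition target_params (c : nat) : nat * nat * nat * nat :=
  let '(K, c1) := Cantor.of_nat c in
  let '(h, c2) := Cantor.of_nat c1 in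
  let '(D, s) := Cantor.of_nat c2 in (K, h, D, s).

Lemma target_params_surj K h D s :
  target_params (Cantor.to_nat (K, Cantor.to_nat (h, Cantor.to_nat (D, s)))) = (K, h, D, s).
Proof. unfold target_params; now rewrite !Cantor.cancel_of_to. Qed.

Definition grid_seq (D s : nat) : nat -> C := fun i => grid_point D (coord s i).

Lemma grid_seq_approx (x0 : nat -> C) D L :
  exists s, (rsum (fun i => Cmod (grid_seq D s i - x0 i)%C ^ 2) L <= 2 * INR L / (INR D + 1))%R.
Proof.
  set (d := (INR D + 1)%R); assert (Hd : (1 <= d)%R) by (pose proof (pos_INR D); unfold d; lra).
  set (v i := proj1_sig (constructive_indefinite_description _ (grid_point_approx D (x0 i)))).
  destruct (coord_surj v L) as [s Hs]; exists s.
  eapply Rle_trans; [apply (rsum_le _ (fun _ => 2 / d ^ 2)%R)|].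
  - intros i Hi; unfold grid_seq; rewrite Hs by auto.
    exact (proj2_sig (constructive_indefinite_description _ (grid_point_approx D (x0 i)))).
  - rewrite rsum_const; pose proof (pos_INR L).
    apply Rmult_le_reg_r with (d * d)%R; [nra|].
    replace (INR L * (2 / d ^ 2) * (d * d))%R with (2 * INR L)%R by (field; lra).
    replace (2 * INR L / d * (d * d))%R with (2 * INR L * d)%R by (field; lra).
    nra.
Qed.

Definition target (n c : nat) : nat -> C :=
  let '(K, h, D, s) := target_params c in zero_sum_target n (grid_seq D s) K (K + h).

Definition target_gen (c : nat) : nat := let '(K, h, _, _) := target_params c in S (K + h).

Definition target_bound (n c : nat) : R :=
  let '(K, h, D, s) := target_params c in
  (rsum (fun i => Cmod (grid_seq D s i)) (n ^ K) + Cmod (head_sum n (grid_seq D s) K))%R.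

Section TargetFamily.
Variables (n : nat).
Hypothesis (Hn : (2 <= n)%nat).

Lemma target_sum c : csum (target n c) (n ^ target_gen c) = RtoC 0.
Proof.
  unfold target, target_gen; destruct (target_params c) as [[[K h] D] s].
  apply zero_sum_target_sum; lia.
Qed.

Lemma target_supp c i : (n ^ target_gen c <= i)%nat -> target n c i = RtoC 0.
Proof.
  unfold target, target_gen; destruct (target_params c) as [[[K h] D] s].
  apply zero_sum_target_supp; lia.
Qed.

Lemma target_le_bound c i : (Cmod (target n c i) <= target_bound n c)%R.
Proof.
  unfold target, target_bound; destruct (target_params c) as [[[K h] D] s].
  apply zero_sum_target_bound; lia.
Qed.

Lemma ratio_le_eighth (A X eps : R) : (0 < eps)%R -> (0 <= A)%R -> (0 < X)%R ->
  (16 * A / eps <= X)%R -> (2 * A / X <= eps / 8)%R.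
Proof.
  intros He HA HX H.
  apply Rmult_le_reg_r with (X * 8 / eps)%R; [apply Rdiv_lt_0_compat; lra|].
  replace (2 * A / X * (X * 8 / eps))%R with (16 * A / eps)%R by (field; lra).
  replace (eps / 8 * (X * 8 / eps))%R with X by (field; lra); auto.
Qed.

Lemma target_dense x0 eps : inH2 x0 -> (0 < eps)%R ->
  exists c, forall N, (rsum (fun i => Cmod (target n c i - x0 i)%C ^ 2) N <= eps)%R.
Proof.
  intros Hx He.
  destruct (series_tail_small _ (eps / 8) (fun k => pow2_ge_0 (Cmod (x0 k))) Hx ltac:(lra))
    as [K Htail].
  assert (HK : (K <= n ^ K)%nat) by (apply Nat.lt_le_incl, Nat.pow_gt_lin_r; lia).
  destruct (nat_above (16 * INR (n ^ K) / eps)) as [D HD].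
  destruct (grid_seq_approx x0 D (n ^ K)) as [s Hs].
  set (S0 := head_sum n (grid_seq D s) K).
  destruct (nat_above (16 * Cmod S0 ^ 2 / eps)) as [h Hh].
  exists (Cantor.to_nat (K, Cantor.to_nat (h, Cantor.to_nat (D, s)))); intros N.
  unfold target; rewrite target_params_surj.
  eapply Rle_trans; [apply zero_sum_target_error; lia|]; fold S0.
  assert (T1 : (rsum (fun i => Cmod (grid_seq D s i - x0 i)%C ^ 2) (n ^ K) <= eps / 8)%R).
  { eapply Rle_trans; [apply Hs|]; pose proof (pos_INR D).
    apply ratio_le_eighth; auto; [apply pos_INR|lra|lra]. }
  assert (T2 : (rsum (fun i => if n ^ K <=? i then Cmod (x0 i) ^ 2 else 0)%R N <= eps / 8)%R).
  { eapply Rle_trans; [|apply (Htail N)]; apply rsum_le; intros i _.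
    destruct (Nat.leb_spec (n ^ K) i), (Nat.leb_spec K i); try lia; try lra; apply pow2_ge_0. }
  assert (T3 : (2 * Cmod S0 ^ 2 / INR ((n - 1) * n ^ (K + h)) <= eps / 8)%R).
  { apply ratio_le_eighth; auto; [apply pow2_ge_0|apply lt_0_INR|eapply Rle_trans; [apply Hh|apply le_INR]].
    - pose proof (pow_ge_1 n ltac:(lia) (K + h)); nia.
    - pose proof (Nat.pow_gt_lin_r n h ltac:(lia)); pose proof (pow_ge_1 n ltac:(lia) K).
      assert (1 <= (n - 1) * n ^ K)%nat by nia.
      rewrite Nat.pow_add_r, Nat.mul_assoc; nia. }
  lra.
Qed.

End TargetFamily.

Lemma H2norm_lt_of_rsum_le (f : nat -> C) B eps : (0 < eps)%R -> (B < eps ^ 2)%R ->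
  (forall N, rsum (fun k => Cmod (f k) ^ 2)%R N <= B)%R -> (H2norm f < eps)%R.
Proof.
  intros He HB Hf.
  destruct (series_bounded_partial_sums _ B (fun k => pow2_ge_0 _) Hf) as [_ HS].
  unfold H2norm; rewrite <- (sqrt_pow2 eps) by lra.
  destruct (Rle_lt_dec 0 (Series (fun k => Cmod (f k) ^ 2)%R)).
  - apply sqrt_lt_1_alt; lra.
  - rewrite sqrt_neg_0 by lra; apply sqrt_lt_R0, pow_lt; lra.
Qed.

Lemma pow_three_halves_above (Y : R) : exists r : nat, (Y <= (3 / 2) ^ r)%R.
Proof.
  destruct (Pow_x_infinity (3 / 2) ltac:(rewrite Rabs_pos_eq; lra) Y) as [r Hr].
  exists r; specialize (Hr r (le_n r)); rewrite Rabs_pos_eq in Hr by (apply pow_le; lra); lra.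
Qed.

(* A label [l] codes a pair (k, c): the target [target n c] to be approximated within
   tolerance [1 / (k + 1)]. *)
Section Labels.
Variable n : nat.

Definition label_target (l : nat) : nat -> C := target n (snd (Cantor.of_nat l)).
Definition label_gen (l : nat) : nat := target_gen (snd (Cantor.of_nat l)).
Definition label_bound (l : nat) : R := target_bound n (snd (Cantor.of_nat l)).
Definition label_tol (l : nat) : R := / (INR (fst (Cantor.of_nat l)) + 1).

Definition label_amplitude (l : nat) : R :=
  (label_bound l ^ 2 * INR n ^ (label_gen l + 2) * (4 / 3) ^ label_gen l)%R.

Definition label_weight (l : nat) : R := (label_amplitude l + 4 / label_tol l + 1)%R.

Definition weight_exponent (l : nat) : nat :=
  proj1_sig (constructive_indefinite_description _ (pow_three_halves_above (label_weight l ^ 2))).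

(* [label_rad] is nondecreasing, exceeds the window length [label_gen], and [(3/2) ^ label_rad l]
   dominates [label_weight l ^ 2]: the hypotheses of the construction. *)
Fixpoint label_rad (l : nat) : nat :=
  match l with
  | O => weight_exponent 0 + label_gen 0 + 1
  | S l' => label_rad l' + weight_exponent (S l') + label_gen (S l') + 1
  end.

Lemma label_tol_pos l : (0 < label_tol l)%R.
Proof. apply Rinv_0_lt_compat; pose proof (pos_INR (fst (Cantor.of_nat l))); lra. Qed.

Lemma label_tol_le_1 l : (label_tol l <= 1)%R.
Proof.
  unfold label_tol; rewrite <- Rinv_1; apply Rinv_le_contravar; [lra|].
  pose proof (pos_INR (fst (Cantor.of_nat l))); lra.
Qed.

Lemma label_rad_mono a b : (a <= b)%nat -> (label_rad a <= label_rad b)%nat.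
Proof. induction 1; simpl; lia. Qed.

Lemma label_rad_ge l : (weight_exponent l + label_gen l + 1 <= label_rad l)%nat.
Proof. destruct l; simpl; lia. Qed.

Lemma label_gen_lt_rad l : (label_gen l < label_rad l)%nat.
Proof. pose proof (label_rad_ge l); lia. Qed.

Lemma label_weight_sq_le l D : (label_rad l <= D)%nat -> (label_weight l ^ 2 <= (3 / 2) ^ D)%R.
Proof.
  intros H; pose proof (label_rad_ge l) as Hge; unfold weight_exponent in Hge.
  destruct (constructive_indefinite_description _ _) as [r Hr]; simpl in Hge.
  eapply Rle_trans; [apply Hr|apply Rle_pow; [lra|lia]].
Qed.

Lemma label_rad_large l l' D : (label_rad l <= D)%nat -> (label_rad l' <= D)%nat ->
  (label_amplitude l' * (4 / label_tol l) <= (3 / 2) ^ D)%R.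
Proof.
  intros H H'.
  assert (Hamp : forall l, (0 <= label_amplitude l)%R).
  { intros m; unfold label_amplitude; apply Rmult_le_pos; [apply Rmult_le_pos|];
      [apply pow2_ge_0|apply pow_le, pos_INR|apply pow_le; lra]. }
  assert (Htol : forall l, (0 < 4 / label_tol l)%R)
    by (intros m; apply Rdiv_lt_0_compat; [lra|apply label_tol_pos]).
  pose proof (Hamp l'); pose proof (Htol l); pose proof (Hamp l); pose proof (Htol l').
  pose proof (label_weight_sq_le l D H); pose proof (label_weight_sq_le l' D H').
  unfold label_weight in *.
  apply Rle_trans with (label_weight l' * label_weight l)%R;
    [unfold label_weight; apply Rmult_le_compat; lra|].
  destruct (Rle_dec (label_weight l) (label_weight l')); unfold label_weight in *; nra.
Qed.

Definition fhc_vector : nat -> C := yvec n label_target label_gen label_rad.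

Hypothesis Hn : (2 <= n)%nat.

Lemma label_target_sum l : csum (label_target l) (n ^ label_gen l) = RtoC 0.
Proof. apply target_sum; auto. Qed.

Lemma label_target_supp l i : (n ^ label_gen l <= i)%nat -> label_target l i = RtoC 0.
Proof. apply target_supp; auto. Qed.

Lemma label_target_bound l i : (Cmod (label_target l i) <= label_bound l)%R.
Proof. apply target_le_bound; auto. Qed.

Lemma fhc_vector_inH2 : inH2 fhc_vector.
Proof.
  exact (yvec_inH2 n label_target label_gen label_rad Hn label_rad_mono label_gen_lt_rad
           label_bound label_tol label_target_bound label_tol_pos label_tol_le_1 label_rad_large).
Qed.

Lemma label_exists c eps : (0 < eps)%R ->
  exists l, label_target l = target n c /\ (label_tol l <= eps)%R.
Proof.
  intros He; destruct (nat_above (/ eps)) as [k Hk].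
  exists (Cantor.to_nat (k, c)); unfold label_target, label_tol.
  rewrite Cantor.cancel_of_to; split; auto.
  simpl fst; rewrite <- (Rinv_inv eps); apply Rinv_le_contravar; [apply Rinv_0_lt_compat|]; lra.
Qed.

Lemma orbit_close_at_visits T (x0 : nat -> C) B l j N : is_adjoint_W n T -> visit label_rad l j ->
  (forall N, rsum (fun i => Cmod (label_target l i - x0 i)%C ^ 2) N <= B)%R ->
  (rsum (fun i => Cmod (Nat.iter j T fhc_vector i - x0 i)%C ^ 2) N <= 2 * label_tol l + 2 * B)%R.
Proof.
  intros HT Hv Hx.
  destruct (adjoint_W_iter n T ltac:(lia) HT fhc_vector j fhc_vector_inH2) as [_ Hval].
  set (b i := block_sum n label_target label_gen label_rad j i).
  eapply Rle_trans.
  { apply (rsum_le _ (fun i => 2 * Cmod (b i - label_target l i)%C ^ 2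
                               + 2 * Cmod (label_target l i - x0 i)%C ^ 2)%R).
    intros i _; replace (Nat.iter j T fhc_vector i) with (b i) by (rewrite Hval; reflexivity).
    replace (b i - x0 i)%C with ((b i - label_target l i) - - (label_target l i - x0 i))%C by ring.
    rewrite <- (Cmod_opp (label_target l i - x0 i)); apply Cmod_sub_sq_le. }
  rewrite rsum_plus, !rsum_scal.
  pose proof (Hx N).
  pose proof (block_sum_error n label_target label_gen label_rad Hn label_rad_mono label_gen_lt_rad
                label_target_sum label_target_supp label_bound label_tol label_target_bound
                label_tol_pos label_rad_large j l N Hv).
  unfold b; lra.
Qed.

End Labels.

Theorem mainTheorem3 (n : nat) (T : (nat -> C) -> (nat -> C)) :
  (2 <= n)%nat -> is_adjoint_W n T -> frequently_hypercyclic T.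
Proof.
  intros Hn HT.
  exists (fhc_vector n); split; [now apply fhc_vector_inH2|].
  intros V HV [x0 Hx0]; destruct (HV x0 Hx0) as [Hx0H [eps [He Hball]]].
  assert (He2 : (0 < eps ^ 2)%R) by (apply pow_lt; lra).
  destruct (target_dense n Hn x0 (eps ^ 2 / 8) Hx0H ltac:(lra)) as [c Hc].
  destruct (label_exists n c (eps ^ 2 / 8) ltac:(lra)) as [l [Hl Htol]].
  apply (lower_density_pos_mono (visit (label_rad n) l)); [|apply visit_density].
  intros j Hv; apply Hball.
  - exact (proj1 (adjoint_W_iter n T ltac:(lia) HT _ j (fhc_vector_inH2 n Hn))).
  - apply (H2norm_lt_of_rsum_le _ (eps ^ 2 / 2)); [auto|lra|]; intros N.
    eapply Rle_trans; [apply (orbit_close_at_visits n Hn T x0 (eps ^ 2 / 8) l j N HT Hv)|lra].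
    now rewrite Hl.
Qed.
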